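(* Let $n\ge 2$ and $g$ be integers with $\gcd(n,g)=1$. The permutation matrix $Q_g$ has $(1,1)$ entry $1$, so it can be written as $Q_g=\begin{pmatrix}1&\mathbf 0\\ \mathbf 0&\mathbf W\end{pmatrix}$ with $\mathbf W$ a permutation matrix of order $n-1$. Then $\mathbf W$ is a primary permutation matrix if and only if $n\nmid (g^{\ell_2}-g^{\ell_1})$ for all integers $0\le \ell_1<\ell_2\le n-2$.
   Context: For an integer $h$, $Q_h$ denotes the $n\times n$ matrix whose $(i,j)$ entry is $1$ if $j\equiv 1+(i-1)h\pmod n$ (indices taken in $\{1,\dots,n\}$) and $0$ otherwise; it is the $h$-circulant matrix with first row $(1,0,\dots,0)$, where an $h$-circulant matrix is one whose each row is the preceding row cyclically shifted $h$ places to the right. A permutation matrix of order $m$ is called primary if its associated permutation is a single cycle of length $m$. *)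

From mathcomp Require Import all_boot all_order all_algebra all_fingroup.
Set Implicit Arguments. Unset Strict Implicit. Unset Printing Implicit Defensive.
Import GRing.Theory Num.Theory.
Local Open Scope ring_scope.

(* The paper's 1-based condition  j == 1 + (i-1) h  (mod n)  becomes,
   with i = i'+1, j = j'+1, the 0-based condition  j' == i' * h (mod n). *)
Definition Qmx (n : nat) (h : int) : 'M[int]_n :=
  \matrix_(i < n, j < n) ((n%:Z %| (j%:Z - i%:Z * h))%Z)%:R.

Definition to_blocks (n : nat) (Hn : (0 < n)%N) (A : 'M[int]_n)
  : 'M[int]_(1 + n.-1) :=
  castmx (esym (prednK Hn), esym (prednK Hn)) A.

Definition Wblock (n : nat) (Hn : (0 < n)%N) (h : int) : 'M[int]_(n.-1) :=
  drsubmx (to_blocks Hn (Qmx n h)).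

Definition primary (m : nat) (W : 'M[int]_m) : Prop :=
  exists s : 'S_m, W = perm_mx s /\ exists i : 'I_m, porbit s i = [set: 'I_m].

(** Write [a] for the residue of [g] mod [n].  Since [j = i g (mod n)] has
  [i = 0] as its only solution when [j = 0], [Q_g] fixes the first index and
  its block [W] is the matrix of [k |-> k a] on the nonzero residues mod [n],
  indexed by [k - 1].  Its powers send the residue [1] to [a ^ l], so [W] is
  a single cycle of length [n - 1] exactly when [a ^ 0, ..., a ^ (n - 2)] are
  pairwise distinct mod [n]. *)

From mathcomp Require Import all_boot all_order all_algebra all_fingroup.
From mathcomp Require Import zify.

Set Implicit Arguments.
Unset Strict Implicit.
Unset Printing Implicit Defensive.
Import GRing.Theory.
Local Open Scope ring_scope.

Lemma uniq_trajectP (T : eqType) (f : T -> T) x m :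
  reflect (forall i j, (i < j < m)%N -> iter j f x != iter i f x)
          (uniq (traject f x m)).
Proof.
rewrite uniq_pairwise; apply: (iffP (pairwiseP x)); rewrite size_traject.
  move=> uniq_f i j /andP[lt_ij lt_jm].
  have lt_im := ltn_trans lt_ij lt_jm.
  by rewrite eq_sym -(nth_traject f lt_im) -(nth_traject f lt_jm); exact: uniq_f.
move=> uniq_f i j lt_im lt_jm lt_ij /=.
by rewrite !nth_traject // eq_sym uniq_f // lt_ij.
Qed.

Lemma porbit_setT_uniq (T : finType) (s : {perm T}) x :
  (porbit s x == [set: T]) = uniq (traject s x #|T|).
Proof.
apply/eqP/idP => [full_x | uniq_t].
  by rewrite -cardsT -full_x uniq_traject_porbit.
have /card_uniqP card_t := uniq_t.
apply/eqP; rewrite eqEcard subsetT cardsT -[X in (X <= _)%N](size_traject s x).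
rewrite -card_t; apply/subset_leq_card/subsetP => y.
by case/trajectP=> l _ ->; rewrite -permX mem_porbit.
Qed.

Lemma porbit_setT_any (T : finType) (s : {perm T}) x y :
  porbit s x = [set: T] -> porbit s y = [set: T].
Proof.
by move=> full_x; rewrite -full_x; apply/eqP; rewrite eq_porbit_mem full_x inE.
Qed.

Lemma perm_mx_inj (R : nzSemiRingType) n : injective (@perm_mx R n).
Proof.
move=> s t eq_st; apply/permP => i.
have := congr1 (fun A : 'M[R]_n => A i (s i)) eq_st; rewrite !mxE eqxx.
by case: eqP => // _ /eqP; rewrite oner_eq0.
Qed.

Lemma primary_perm_mxE m (s : 'S_m) :
  primary (perm_mx s) <-> exists i, porbit s i = [set: 'I_m].
Proof.
split=> [[t [/perm_mx_inj -> //]] | cycle_s]; by exists s.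
Qed.

Lemma eqn_modMr_coprime d a m n : coprime d a ->
  (m * a == n * a %[mod d])%N = (m == n %[mod d])%N.
Proof.
move=> co_da; wlog le_nm : m n / (n <= m)%N.
  move=> le_mod; case: (leqP n m) => [|/ltnW] le; first exact: le_mod.
  by rewrite eq_sym [RHS]eq_sym le_mod.
by rewrite !eqn_mod_dvd ?leq_mul2r ?le_nm ?orbT // -mulnBl Gauss_dvdl.
Qed.

Lemma modn_coprimeM_neq0 n a k : coprime n a -> (0 < k < n)%N ->
  (k * a %% n != 0)%N.
Proof.
move=> co_na /andP[k_gt0 lt_kn]; rewrite -/(dvdn _ _) Gauss_dvdl //.
by apply: contraL lt_kn => /(dvdn_leq k_gt0); rewrite leqNgt.
Qed.

Lemma eqz_mod_nat (d x y : nat) : (x%:Z == y %[mod d])%Z = (x == y %[mod d])%N.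
Proof. by rewrite !modz_nat. Qed.

Lemma absz_modz (n : nat) (g : int) :
  (0 < n)%N -> `|(g %% n)%Z|%N = (g %% n)%Z :> int.
Proof. by case: n => // n _; rewrite gez0_abs // modz_ge0. Qed.

Lemma dvdz_subMr_absz (n : nat) (g : int) (x y : nat) : (0 < n)%N ->
  (n%:Z %| x%:Z - y%:Z * g)%Z = (x == y * `|(g %% n)%Z| %[mod n])%N.
Proof.
move=> n_gt0; rewrite -eqz_mod_dvd -modzMmr -(absz_modz g n_gt0).
by rewrite -PoszM eqz_mod_nat.
Qed.

Lemma dvdz_subX_absz (n : nat) (g : int) (l1 l2 : nat) : (0 < n)%N ->
  (n%:Z %| g ^+ l2 - g ^+ l1)%Z =
  (`|(g %% n)%Z| ^ l2 == `|(g %% n)%Z| ^ l1 %[mod n])%N.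
Proof.
move=> n_gt0; rewrite -eqz_mod_dvd -modzXm -[(g ^+ l1 %% n)%Z]modzXm.
by rewrite -[(g %% n)%Z in LHS](absz_modz g n_gt0) -!natz -!natrX !natz eqz_mod_nat.
Qed.

Lemma coprime_absz_modz (n : nat) (g : int) :
  coprimez n%:Z g -> coprime n `|(g %% n)%Z|.
Proof. by rewrite /coprimez -gcdz_modr. Qed.

Lemma ord_pred_succ_lt n (k : 'I_n.-1) : (k.+1 < n)%N.
Proof. by have := ltn_ord k; lia. Qed.

(** Multiplication by [a] on the nonzero residues mod [n], where
  [k : 'I_n.-1] stands for the residue [k + 1]. *)
Section MulResidues.

Variables (n a : nat).
Hypothesis coprime_na : coprime n a.

Fact mulres_subproof (k : 'I_n.-1) : ((k.+1 * a %% n).-1 < n.-1)%N.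
Proof.
have lt_kn := ord_pred_succ_lt k.
by have := ltn_pmod (k.+1 * a) (ltn_trans (ltn0Sn k) lt_kn); lia.
Qed.

Definition mulres (k : 'I_n.-1) : 'I_n.-1 := Ordinal (mulres_subproof k).

Lemma mulresS k : (mulres k).+1 = (k.+1 * a %% n)%N.
Proof. by rewrite prednK // lt0n modn_coprimeM_neq0 ?ord_pred_succ_lt. Qed.

Lemma mulres_inj : injective mulres.
Proof.
move=> k l /(congr1 (fun i : 'I_n.-1 => (val i).+1)).
rewrite !mulresS => /eqP; rewrite eqn_modMr_coprime //.
by rewrite !modn_small ?ord_pred_succ_lt // => /eqP [] /val_inj.
Qed.

Definition mulres_perm : {perm 'I_n.-1} := perm mulres_inj.

Lemma mulres_permX l k : ((mulres_perm ^+ l)%g k).+1 = (k.+1 * a ^ l %% n)%N.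
Proof.
elim: l k => [|l IHl] k.
  by rewrite expg0 perm1 muln1 modn_small ?ord_pred_succ_lt.
by rewrite expgSr permM permE mulresS IHl modnMml expnSr mulnA.
Qed.

Hypothesis n_gt1 : (1 < n)%N.

Lemma mulres_perm_cycleP :
  (exists i, porbit mulres_perm i = [set: 'I_n.-1]) <->
  (forall l1 l2, (l1 < l2 < n.-1)%N -> (a ^ l2 != a ^ l1 %[mod n])%N).
Proof.
have lt0_n1 : (0 < n.-1)%N by lia.
pose one := Ordinal lt0_n1.
have iterS l : (iter l mulres_perm one).+1 = (a ^ l %% n)%N.
  by rewrite -permX mulres_permX mul1n.
split=> [[i /(porbit_setT_any one) /eqP] | distinct].
  rewrite porbit_setT_uniq card_ord => /uniq_trajectP uniq_t l1 l2 lt_l.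
  apply: contra (uniq_t _ _ lt_l) => /eqP eq_a.
  by apply/eqP/val_inj/succn_inj; rewrite !iterS.
exists one; apply/eqP; rewrite porbit_setT_uniq card_ord.
apply/uniq_trajectP => l1 l2 lt_l; apply: contra (distinct _ _ lt_l).
by move/eqP/(congr1 (fun i : 'I_n.-1 => (val i).+1)); rewrite !iterS => ->.
Qed.

End MulResidues.

Lemma Qmx_modE n g (i j : 'I_n) : (0 < n)%N ->
  Qmx n g i j = (j == i * `|(g %% n)%Z| %[mod n])%N%:R.
Proof. by move=> n_gt0; rewrite mxE dvdz_subMr_absz. Qed.

Lemma to_blocks_Qmx n g (n_gt0 : (0 < n)%N) (co_ng : coprimez n%:Z g) :
  to_blocks n_gt0 (Qmx n g) =
  block_mx 1 0 0 (perm_mx (mulres_perm (coprime_absz_modz co_ng))).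
Proof.
rewrite -[LHS]submxK; congr block_mx; apply/matrixP => i j;
  rewrite !mxE castmxE Qmx_modE //= ?ord1 ?add1n.
- by rewrite mul0n !eqxx.
- by rewrite mul0n mod0n modn_small ?ord_pred_succ_lt.
- by rewrite mod0n eq_sym
     (negbTE (modn_coprimeM_neq0 (coprime_absz_modz co_ng) _)) ?ord_pred_succ_lt.
- rewrite modn_small ?ord_pred_succ_lt // permE eq_sym.
  by rewrite -(mulresS (coprime_absz_modz co_ng)) eqSS.
Qed.

Lemma Wblock_perm_mx n g (n_gt0 : (0 < n)%N) (co_ng : coprimez n%:Z g) :
  Wblock n_gt0 g = perm_mx (mulres_perm (coprime_absz_modz co_ng)).
Proof. by rewrite /Wblock (to_blocks_Qmx n_gt0 co_ng) block_mxKdr. Qed.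

Theorem mainTheorem2 (n : nat) (g : int) (hn : (2 <= n)%N)
    (cop : coprimez n%:Z g) :
  to_blocks (ltnW hn) (Qmx n g) = block_mx 1 0 0 (Wblock (ltnW hn) g)
  /\ (primary (Wblock (ltnW hn) g) <->
      (forall l1 l2 : nat, (l1 < l2 <= n - 2)%N ->
         ~~ (n%:Z %| g ^+ l2 - g ^+ l1)%Z)).
Proof.
rewrite (Wblock_perm_mx _ cop); split; first exact: to_blocks_Qmx.
rewrite primary_perm_mxE mulres_perm_cycleP //.
by split=> distinct l1 l2 lt_l; have := distinct l1 l2;
   rewrite dvdz_subX_absz ?(ltnW hn) //; apply; lia.
Qed.
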